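(* Let $\mathbf{x}$ be a parking function of length $n$, run Algorithm A on $\mathbf{x}$, and let $1\le i<j\le n$. Then $|s_i(\mathbf{x})|>|s_j(\mathbf{x})|$ if and only if $P(\mathbf{x})$ contains the up edge $i\rightarrow j$.
   Context: A parking function of length $n$ is a sequence of positive integers which, sorted increasingly as $x_{(1)}\le\dots\le x_{(n)}$, satisfies $x_{(k)}\le k$ for all $k$. Algorithm A: Input a parking function $\mathbf{x}\in\mathbb{Z}_{>0}^n$; start with the vertex set $[n]$ and no edges, and set $\mathbf{y}:=\mathbf{x}-(1,\dots,1)$. Repeat the following. (Up step) If some $y_k=0$: let $j:=\max\{k: y_k=0\}$ (the up feeder); for every $k>j$ with $y_k>0$, introduce the directed (up) edge $j\rightarrow k$ and replace $y_k$ by $y_k-1$; replace every entry that was negative at the start of this step by that entry minus $1$; set $y_j:=-1$; repeat. (Down step) Else, if some $y_k>0$: among all indices $j$ such that there is $k<j$ with $y_k>0$ and the edge $k\leftarrow j$ not yet introduced (down feeder candidates), choose $j$ with minimal $y_j$ (the down feeder); for every $k<j$ with $y_k>0$, introduce the directed (down) edge $k\leftarrow j$ (directed from $j$ to $k$) and replace $y_k$ by $y_k-1$; repeat. (Stop) Else (all $y_k<0$): join every pair of vertices not yet joined by an undirected (downish) edge and stop. Output: the mixed graph $P(\mathbf{x})$ and the source priority vector $s(\mathbf{x}):=(y_1,\dots,y_n)$ (final values). *)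

From HB Require Import structures.
From mathcomp Require Import all_boot all_order all_algebra.
Set Implicit Arguments. Unset Strict Implicit. Unset Printing Implicit Defensive.
Import Order.TTheory GRing.Theory Num.Theory.
Local Open Scope ring_scope.

(* Indices are 0-based: vertex k : 'I_n stands for vertex k+1 of the paper. *)

Definition parking (x : seq nat) : Prop :=
  all (fun a => 0 < a)%N x /\
  forall k : nat, (k < size x)%N -> (nth 0%N (sort leq x) k <= k.+1)%N.

(* State of Algorithm A: current vector y, set of up edges (j,k) meaning
   j -> k, set of down edges (j,k) meaning the down edge k <- j
   (directed from j to k). Undirected (downish) edges are irrelevant here. *)
Record state (n : nat) := St {
  yv : {ffun 'I_n -> int};
  upE : {set 'I_n * 'I_n};
  downE : {set 'I_n * 'I_n}
}.

Definition init (x : seq nat) : state (size x) :=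
  St [ffun k : 'I_(size x) => (nth 0%N x k)%:Z - 1] set0 set0.

Definition candidate n (s : state n) (j : 'I_n) : Prop :=
  exists k : 'I_n, [/\ (k < j)%N, 0 < yv s k & (j, k) \notin downE s].

Definition up_next n (s : state n) (j : 'I_n) : state n :=
  St [ffun k : 'I_n => if k == j then -1
                else if ((j < k)%N && (0 < yv s k)) then yv s k - 1
                else if yv s k < 0 then yv s k - 1
                else yv s k]
     (upE s :|: [set p : 'I_n * 'I_n | (p.1 == j) && (j < p.2)%N && (0 < yv s p.2)])
     (downE s).

Definition down_next n (s : state n) (j : 'I_n) : state n :=
  St [ffun k : 'I_n => if ((k < j)%N && (0 < yv s k)) then yv s k - 1 else yv s k]
     (upE s)
     (downE s :|: [set p : 'I_n * 'I_n | (p.1 == j) && (p.2 < j)%N && (0 < yv s p.2)]).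

(* One (non-stop) step of Algorithm A; ties in the choice of the down feeder
   are resolved nondeterministically. *)
Inductive step n : state n -> state n -> Prop :=
| StepUp (s : state n) (j : 'I_n) :
    yv s j = 0 -> (forall k, yv s k = 0 -> (k <= j)%N) ->
    step s (up_next s j)
| StepDown (s : state n) (j : 'I_n) :
    (forall k, yv s k != 0) -> (exists k, 0 < yv s k) ->
    candidate s j -> (forall j', candidate s j' -> yv s j <= yv s j') ->
    step s (down_next s j).

Inductive reach n : state n -> state n -> Prop :=
| ReachRefl (s : state n) : reach s s
| ReachStep (s t u : state n) : step s t -> reach t u -> reach s u.

Definition run_final (x : seq nat) (s : state (size x)) : Prop :=
  reach (init x) s /\ forall k, yv s k < 0.
Arguments run_final : clear implicits.

From HB Require Import structures.
From mathcomp Require Import all_boot all_order all_algebra.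
From mathcomp Require Import zify.
Import Order.TTheory GRing.Theory Num.Theory.
Local Open Scope ring_scope.

(* Every step of Algorithm A keeps the following description of the up edges
   in terms of the current vector y: for i < j, the up edge i -> j is present
   iff y_i < 0 and either y_j >= 0 or y_i < y_j.  Initially y >= 0 and there
   are no edges.  A down step only lowers positive entries, which stay
   nonnegative.  An up step with feeder f decreases every negative entry by
   one (so their order is kept) and sets y_f := -1, which then lies above all
   older negative entries; the edges f -> j it creates are exactly towards
   the j > f with y_j > 0, since no j > f has y_j = 0.  When the algorithm
   stops all entries are negative, and the condition reads y_i < y_j, i.e.
   |y_j| < |y_i|. *)

Definition up_edges_spec {n} (s : state n) : Prop :=
  forall i j : 'I_n, (i < j)%N ->
    ((i, j) \in upE s) = (yv s i < 0) && ((0 <= yv s j) || (yv s i < yv s j)).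

Lemma up_edges_spec_init {x : seq nat} :
  all (fun a => 0 < a)%N x -> up_edges_spec (init x).
Proof.
move=> /all_nthP x_gt0 i j _; rewrite /init /= in_set0 ffunE.
have xi_gt0 := x_gt0 0%N i (ltn_ord i).
by have -> : ((nth 0%N x i)%:Z - 1 < 0) = false by lia.
Qed.

Lemma up_edges_spec_down_next {n} (s : state n) (f : 'I_n) :
  up_edges_spec s -> up_edges_spec (down_next s f).
Proof.
move=> spec_s i j lt_ij; rewrite /down_next /= !ffunE spec_s //.
by repeat case: ifP => ?; lia.
Qed.

Lemma up_edges_spec_up_next {n} (s : state n) (f : 'I_n) :
  yv s f = 0 -> (forall k, yv s k = 0 -> (k <= f)%N) ->
  up_edges_spec s -> up_edges_spec (up_next s f).
Proof.
move=> yf0 f_max_zero spec_s i j lt_ij.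
rewrite /up_next /= in_setU inE /= !ffunE spec_s //.
have [eq_jf|_] := eqVneq j f.
  subst j.
  have ne_if : (i == f) = false by rewrite -val_eqE ltn_eqF.
  by rewrite yf0 ne_if; repeat case: ifP => ?; lia.
have [eq_if|_] := eqVneq i f; last first.
  by repeat case: ifP => ?; lia.
subst i.
have yj_neq0 : yv s j != 0 by apply/eqP => /f_max_zero; rewrite leqNgt lt_ij.
by rewrite yf0 lt_ij; move: yj_neq0; repeat case: ifP => ?; lia.
Qed.

Lemma up_edges_spec_reach {n} {s t : state n} :
  reach s t -> up_edges_spec s -> up_edges_spec t.
Proof.
elim=> // {}s {}t u [s' f yf0 f_max_zero|s' f _ _ _ _] _ IH spec_s; apply: IH.
  exact: up_edges_spec_up_next.
exact: up_edges_spec_down_next.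
Qed.

Theorem lemma2p5 (x : seq nat) (s : state (size x)) :
  parking x -> run_final x s ->
  forall i j : 'I_(size x), (i < j)%N ->
    (`|yv s j| < `|yv s i| <-> (i, j) \in upE s).
Proof.
move=> [x_gt0 _] [run_s s_neg] i j lt_ij.
have spec_s := up_edges_spec_reach run_s (up_edges_spec_init x_gt0).
rewrite spec_s // (ltr0_norm (s_neg i)) (ltr0_norm (s_neg j)) ltrN2.
by rewrite (s_neg i) leNgt (s_neg j).
Qed.
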